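(* Let $\alpha=(\alpha_j)_{j\ge1}$ and $\beta=(\beta_j)_{j\ge0}$ be sequences of positive numbers (or independent variables) and let $\zeta_{nk}=\zeta_{nk}(\alpha,\beta)$ be the Euler polynomials generated by $\alpha,\beta$. If $n\in\mathbf N$ and $0\le k\le n$, then $$\zeta_{nk}(\alpha,\beta)=\zeta_{n-1,k-1}(\alpha,\beta)\,\alpha_{n-k+1}+\zeta_{n-1,k}(\alpha,\beta)\,\beta_k .$$
   Context: For $\omega=(\varepsilon_1,\dots,\varepsilon_n)\in\{0,1\}^n$ define $w_n(\omega)=\prod_{m=1}^n g_m$, where, with $j=\#\{l:1\le l\le m-1,\ \varepsilon_l=0\}$, $g_m=\alpha_{m-j}$ if $\varepsilon_m=0$ and $g_m=\beta_j$ if $\varepsilon_m=1$. For $n\ge1$, $0\le k\le n$, $\zeta_{nk}(\alpha,\beta)=\sum w_n(\omega)$ over all $\omega\in\{0,1\}^n$ with exactly $k$ zeros; $\zeta_{00}=1$ and $\zeta_{nk}=0$ if $k<0$ or $k>n$. *)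

From mathcomp Require Import all_boot all_algebra.
Set Implicit Arguments. Unset Strict Implicit. Unset Printing Implicit Defensive.
Import GRing.Theory.
Local Open Scope ring_scope.

(* A word omega = (eps_1,...,eps_n) in {0,1}^n is a finite function
   'I_n -> bool; position i : 'I_n stands for m = i+1, and
   [eps i = false] means eps_m = 0, [eps i = true] means eps_m = 1. *)

Definition zeros_before (n : nat) (w : {ffun 'I_n -> bool}) (i : 'I_n) : nat :=
  #|[set l : 'I_n | (l < i)%N && ~~ w l]|.

Definition nzeros (n : nat) (w : {ffun 'I_n -> bool}) : nat :=
  #|[set l : 'I_n | ~~ w l]|.

Definition gfac (R : comRingType) (alpha beta : nat -> R) (n : nat)
  (w : {ffun 'I_n -> bool}) (i : 'I_n) : R :=
  let j := zeros_before w i in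
  if w i then beta j else alpha (i.+1 - j)%N.

Definition weight (R : comRingType) (alpha beta : nat -> R) (n : nat)
  (w : {ffun 'I_n -> bool}) : R :=
  \prod_(i : 'I_n) gfac alpha beta w i.

(* zeta_{nk}: sum of weights over omega with exactly k zeros;
   zeta_{nk} = 0 for k < 0 (and automatically for k > n, empty sum);
   zeta_{00} = 1 (the empty product for the unique empty word). *)
Definition zeta (R : comRingType) (alpha beta : nat -> R) (n : nat) (k : int) : R :=
  match k with
  | Posz k => \sum_(w : {ffun 'I_n -> bool} | nzeros w == k) weight alpha beta w
  | Negz _ => 0
  end.

From mathcomp Require Import all_boot all_algebra.
Import GRing.Theory.
Local Open Scope ring_scope.

(* Split a word of length n according to its last letter eps_n.  The factors
   g_1, ..., g_(n-1) depend only on the prefix, so they multiply to the weight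
   of the prefix; the last factor is beta_j if eps_n = 1 and alpha_(n-j) if
   eps_n = 0, where j is the number of zeros of the prefix.  Sorting the words
   with k zeros by their last letter gives the two terms of the recursion. *)

Section ExtendWord.

Variable m : nat.

Definition extend_word (w : {ffun 'I_m -> bool}) (b : bool) : {ffun 'I_m.+1 -> bool} :=
  [ffun i => if unlift ord_max i is Some j then w j else b].

Lemma widen_ord_max_lift (j : 'I_m) : widen_ord (leqnSn m) j = lift ord_max j.
Proof. exact/val_inj/esym/lift_max. Qed.

Lemma extend_word_widen w b (j : 'I_m) : extend_word w b (widen_ord (leqnSn m) j) = w j.
Proof. by rewrite widen_ord_max_lift ffunE liftK. Qed.

Lemma extend_word_max w b : extend_word w b ord_max = b.
Proof. by rewrite ffunE unlift_none. Qed.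

Lemma extend_word_bij : bijective (fun p => extend_word p.1 p.2).
Proof.
exists (fun w : {ffun 'I_m.+1 -> bool} => ([ffun j => w (lift ord_max j)], w ord_max)).
  move=> [w b] /=; rewrite extend_word_max; congr (_, _).
  by apply/ffunP => j; rewrite ffunE -widen_ord_max_lift extend_word_widen.
move=> w; apply/ffunP => i.
case: (unliftP ord_max i) => [j ->|->]; last by rewrite extend_word_max.
by rewrite -widen_ord_max_lift extend_word_widen ffunE widen_ord_max_lift.
Qed.

Lemma sum_extend_word (V : nmodType) (F : {ffun 'I_m.+1 -> bool} -> V) :
  \sum_w F w = \sum_w (F (extend_word w false) + F (extend_word w true)).
Proof.
rewrite (reindex _ (onW_bij _ extend_word_bij)) /=.
rewrite -(pair_bigA _ (fun w b => F (extend_word w b))) /=.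
by apply: eq_bigr => w _; rewrite big_bool addrC.
Qed.

Lemma card_set_ord_recr (P : pred 'I_m.+1) :
  #|[set i | P i]| = (#|[set j : 'I_m | P (widen_ord (leqnSn m) j)]| + P ord_max)%N.
Proof.
rewrite -!sum1dep_card [LHS]big_mkcond big_ord_recr /= [in RHS]big_mkcond /=.
by case: (P ord_max); rewrite ?addn0 ?addn1.
Qed.

Lemma nzeros_extend_word w b : nzeros (extend_word w b) = (nzeros w + ~~ b)%N.
Proof.
rewrite /nzeros card_set_ord_recr extend_word_max; congr (_ + _)%N.
by apply: eq_card => j; rewrite !inE extend_word_widen.
Qed.

Lemma zeros_before_extend_word_widen w b (j : 'I_m) :
  zeros_before (extend_word w b) (widen_ord (leqnSn m) j) = zeros_before w j.
Proof.
rewrite /zeros_before card_set_ord_recr /= ltnNge (ltnW (ltn_ord j)) addn0.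
by apply: eq_card => l; rewrite !inE extend_word_widen.
Qed.

Lemma zeros_before_extend_word_max w b :
  zeros_before (extend_word w b) ord_max = nzeros w.
Proof.
rewrite /zeros_before card_set_ord_recr /= ltnn addn0.
by apply: eq_card => j; rewrite !inE extend_word_widen ltn_ord.
Qed.

Variables (R : comNzRingType) (alpha beta : nat -> R).

Lemma weight_extend_word w b :
  weight alpha beta (extend_word w b) =
    weight alpha beta w * (if b then beta (nzeros w) else alpha (m.+1 - nzeros w)%N).
Proof.
rewrite /weight big_ord_recr /= {2}/gfac zeros_before_extend_word_max extend_word_max.
congr (_ * _); apply: eq_bigr => j _.
by rewrite /gfac zeros_before_extend_word_widen extend_word_widen.
Qed.

Lemma zeta_ord_recr (k : nat) :
  zeta alpha beta m.+1 k =
    \sum_(w : {ffun 'I_m -> bool} | (nzeros w).+1 == k)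
       weight alpha beta w * alpha (m.+1 - nzeros w)%N
    + zeta alpha beta m k * beta k.
Proof.
rewrite /= big_mkcond sum_extend_word big_split /=.
congr (_ + _); rewrite ?big_distrl [RHS]big_mkcond; apply: eq_bigr => w _;
  rewrite nzeros_extend_word weight_extend_word /= ?addn0 ?addn1;
  by case: eqP => // ->.
Qed.

End ExtendWord.

Theorem theorem6p1 (R : comRingType) (alpha beta : nat -> R) (n k : nat) :
  (1 <= n)%N -> (k <= n)%N ->
  zeta alpha beta n (k%:Z) =
    zeta alpha beta n.-1 (k%:Z - 1) * alpha (n - k + 1)%N
    + zeta alpha beta n.-1 (k%:Z) * beta k.
Proof.
case: n => [//|m] _ le_km; rewrite zeta_ord_recr /=.
case: k le_km => [|k] le_km.
  by rewrite big_pred0 // mul0r add0r.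
have -> : k.+1%:Z - 1 = k by rewrite intS addrC addKr.
congr (_ + _); rewrite /= big_distrl; apply: eq_big => [w|w /eqP [->]] //.
by rewrite addn1 subSS subSn // -ltnS.
Qed.
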